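(* In the Boosted HiPPA setting of the context, let $\{x^k\}$ and $\{\bar x^k\}$ be generated by the algorithm and let $\bar y^k\in\operatorname{prox}^p_{\gamma\varphi}(x^k)$ satisfy $\|\bar x^k-\bar y^k\|=\operatorname{dist}(\bar x^k,\operatorname{prox}^p_{\gamma\varphi}(x^k))$. If $\sum_{k=0}^\infty\|R^{\varepsilon_k}_\gamma(x^k)\|<\infty$ and $\sum_{k=0}^\infty\|d^k\|<\infty$, then $\{x^k\}$, $\{\bar x^k\}$ and $\{\bar y^k\}$ converge to a common proximal fixed point $\hat x$, i.e., $\hat x\in\operatorname{prox}^p_{\gamma\varphi}(\hat x)$.
   Context: Standing setting. $p>1$; $\varphi:\mathbb{R}^n\to\mathbb{R}\cup\{+\infty\}$ is proper, lsc and bounded from below. For $\gamma>0$: $\operatorname{prox}^p_{\gamma\varphi}(x):=\operatorname{argmin}_y\big(\varphi(y)+\frac1{p\gamma}\|x-y\|^p\big)$, $\varphi^p_\gamma(x):=\inf_y\big(\varphi(y)+\frac1{p\gamma}\|x-y\|^p\big)$. $\{\varepsilon_k\},\{\delta_k\}$ are non-increasing positive sequences with $\sum_k\varepsilon_k<\infty$, $\delta_k\downarrow0$. Prox approximation: for each index $j$ and point $x$ needed, a point $P_j(x)$ (written $\operatorname{prox}^{p,\varepsilon_j}_{\gamma\varphi}(x)$) is available with $\operatorname{dist}(P_j(x),\operatorname{prox}^p_{\gamma\varphi}(x))<\delta_j$ and $\varphi(P_j(x))+\frac1{p\gamma}\|x-P_j(x)\|^p<\varphi^p_\gamma(x)+\varepsilon_j$.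 Define $\varphi^{p,\varepsilon_j}_\gamma(x):=\varphi(P_j(x))+\frac1{p\gamma}\|x-P_j(x)\|^p$, $R^{\varepsilon_j}_\gamma(x):=x-P_j(x)$. Boosted HiPPA: choose $x^0$, $\gamma>0$, $\sigma\in(0,\frac1{p\gamma})$, $\vartheta\in(0,1)$. At iteration $k$: $\bar x^k:=P_k(x^k)$; choose a direction $d^k$; for $m=0,1,\dots$ set $\alpha_k=\vartheta^m$, $\hat x^{k+1}=(1-\alpha_k)\bar x^k+\alpha_k(x^k+d^k)$, until $\varphi^{p,\varepsilon_{k+1}}_\gamma(\hat x^{k+1})\le\varphi^{p,\varepsilon_k}_\gamma(x^k)-\sigma\|R^{\varepsilon_k}_\gamma(x^k)\|^p+\varepsilon_k+\varepsilon_{k+1}$; set $x^{k+1}=\hat x^{k+1}$. *)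

From HB Require Import structures.
From mathcomp Require Import all_boot all_order all_algebra.
From mathcomp Require Import all_classical all_reals.
From mathcomp Require Import ereal exp.
Set Implicit Arguments. Unset Strict Implicit. Unset Printing Implicit Defensive.
Import Order.TTheory GRing.Theory Num.Theory.
Local Open Scope ring_scope.
Local Open Scope classical_set_scope.

Section Defs.
Context {R : realType} {n : nat}.
Notation vec := 'rV[R]_n.

Definition enorm (v : vec) : R := Num.sqrt (\sum_(i < n) (v ord0 i) ^+ 2).

Definition proper_fun (f : vec -> \bar R) : Prop :=
  (exists x, f x < +oo)%E /\ (forall x, f x != -oo%E).

Definition lsc (f : vec -> \bar R) : Prop :=
  forall (x : vec) (a : R), (a%:E < f x)%E ->
    exists2 delta : R, 0 < delta &
      forall y : vec, enorm (y - x) < delta -> (a%:E < f y)%E.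

Definition bounded_below (f : vec -> \bar R) : Prop :=
  exists m : R, forall x, (m%:E <= f x)%E.

Definition prox_obj (phi : vec -> \bar R) (p gamma : R) (x y : vec) : \bar R :=
  (phi y + ((powR (enorm (x - y)) p) / (p * gamma))%:E)%E.

Definition prox (phi : vec -> \bar R) (p gamma : R) (x : vec) : set vec :=
  [set y | forall z, (prox_obj phi p gamma x y <= prox_obj phi p gamma x z)%E].

Definition envelope (phi : vec -> \bar R) (p gamma : R) (x : vec) : \bar R :=
  ereal_inf [set prox_obj phi p gamma x y | y in [set: vec]].

(* distance from a point to a set (+oo for the empty set) *)
Definition dist (z : vec) (S : set vec) : \bar R :=
  ereal_inf [set (enorm (z - s))%:E | s in S].

(* sum_k a_k < oo for nonnegative a: bounded partial sums *)
Definition summable (a : nat -> R) : Prop :=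
  exists M : R, forall N, \sum_(k < N) a k <= M.

Definition converges_to (u : nat -> vec) (l : vec) : Prop :=
  forall eps : R, 0 < eps -> exists N, forall k, (N <= k)%N -> enorm (u k - l) < eps.

Definition nonincreasing_seq (u : nat -> R) : Prop := forall k, u k.+1 <= u k.

Definition tends_to_zero (u : nat -> R) : Prop :=
  forall eps : R, 0 < eps -> exists N, forall k, (N <= k)%N -> `|u k| < eps.

Definition env_approx (phi : vec -> \bar R) (p gamma : R)
  (P : nat -> vec -> vec) (j : nat) (x : vec) : \bar R :=
  prox_obj phi p gamma x (P j x).

Definition resid (P : nat -> vec -> vec) (j : nat) (x : vec) : vec := x - P j x.

End Defs.

(* Since x^{k+1} - x^k = (1 - a)(xbar^k - x^k) + a d^k with a = vartheta^m in [0, 1],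
   every step moves x^k by at most ||R(x^k)|| + ||d^k||, a summable bound, so {x^k} is
   Cauchy.  Its limit xhat is also the limit of xbar^k = x^k - R(x^k) and of ybar^k,
   because ||R(x^k)|| -> 0 and ||xbar^k - ybar^k|| < delta_k -> 0.  Finally the graph of
   prox is closed (phi is lsc and the penalty is continuous), and ybar^k is in
   prox(x^k) with (x^k, ybar^k) -> (xhat, xhat). *)

From HB Require Import structures.
From mathcomp Require Import all_boot all_order all_algebra.
From mathcomp Require Import all_classical all_reals all_analysis.
From mathcomp Require Import lra.
From Pilot Require Import Defs.
Set Implicit Arguments.
Unset Strict Implicit.
Unset Printing Implicit Defensive.
Import Order.TTheory GRing.Theory Num.Theory.
Import numFieldNormedType.Exports.
Local Open Scope ring_scope.
Local Open Scope classical_set_scope.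

(* MathComp-Analysis gives matrices a normed-module and a complete structure but does
   not declare their join, which [normed_cvg] needs. *)
HB.instance Definition _ (R : realType) (m n : nat) := Complete.on 'M[R]_(m, n).

Section sequences.
Context {R : realType}.
Implicit Types (a b c : R ^nat).

Lemma summable_cvg_series a : (forall k, 0 <= a k) -> summable a -> cvgn (series a).
Proof.
move=> a0 [M aM]; apply: nondecreasing_is_cvgn; first exact: nondecreasing_series.
by exists M => _ [N _ <-]; rewrite /series /= big_mkord.
Qed.

Lemma summable_cvg0 a : (forall k, 0 <= a k) -> summable a -> a k @[k --> \oo] --> 0.
Proof. by move=> a0 /(summable_cvg_series a0) /cvg_series_cvg_0. Qed.

Lemma summableD a b : summable a -> summable b -> summable (a + b).
Proof.
move=> [Ma aM] [Mb bM]; exists (Ma + Mb) => N.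
by rewrite big_split lerD.
Qed.

Lemma tends_to_zero_cvg0 a : tends_to_zero a -> a k @[k --> \oo] --> 0.
Proof.
move=> a0; apply/cvgr0Pnorm_lt => e /a0 [N aN].
by exists N => // k /aN.
Qed.

Lemma cvg_powR (p : R) a (l : R) : 0 < p -> (forall k, 0 <= a k) ->
  a k @[k --> \oo] --> l -> powR (a k) p @[k --> \oo] --> powR l p.
Proof.
move=> p0 a0 al.
have l0 : 0 <= l by rewrite -(cvg_lim _ al) //; apply: limr_ge; [exact: cvgP al | exact: nearW].
(* [derivable_powR] only covers l > 0; at 0 the terms a k may vanish, so use the
   monotonicity of t |-> t `^ p instead. *)
move: al; have [->|l_neq0] := eqVneq l 0 => al.
  rewrite powR0 ?gt_eqF //; apply/cvgr0Pnorm_lt => e e0.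
  have e'0 : 0 < e `^ p^-1 by exact: powR_gt0.
  near=> k; rewrite ger0_norm ?powR_ge0 //.
  rewrite -[ltRHS](powRr1 (ltW e0)) -[in 1](mulVf (lt0r_neq0 p0)) powRrM.
  apply: gt0_ltr_powR; rewrite ?nnegrE ?powR_ge0 // -(ger0_norm (a0 k)).
  by near: k; exact: (cvgr0Pnorm_lt _).1 al _ e'0.
have l_gt0 : 0 < l by rewrite lt_neqAle eq_sym l_neq0.
have powR_cont : {for l, continuous (fun x : R => x `^ p)}.
  apply: differentiable_continuous; apply/derivable1_diffP.
  by apply: derivable_powR; rewrite in_itv /= l_gt0.
exact: (continuous_cvg _ powR_cont al).
Unshelve. all: by end_near. Qed.

Section normed.
Variable V : normedModType R.

Lemma cvg0_norm_le (v : V ^nat) c : (forall k, `|v k| <= c k) ->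
  c k @[k --> \oo] --> 0 -> v k @[k --> \oo] --> 0.
Proof.
move=> vc c0; apply/norm_cvg0P; apply: (squeeze_cvgr _ (cvg_cst 0) c0).
by apply: nearW => k; rewrite normr_ge0 vc.
Qed.

Lemma norm_relaxation_step_le (t : R) (x y d : V) : 0 <= t <= 1 ->
  `|(1 - t) *: y + t *: (x + d) - x| <= `|x - y| + `|d|.
Proof.
move=> /andP[t0 t1].
have -> : (1 - t) *: y + t *: (x + d) - x = (1 - t) *: (y - x) + t *: d.
  rewrite scalerBr [(1 - t) *: x]scalerBl scale1r scalerDr opprB addrAC -!addrA.
  by congr (_ + _); rewrite addrC -!addrA; congr (_ + _); rewrite addrC.
apply: le_trans (ler_normD _ _) _.
rewrite !normrZ (ger0_norm t0) ger0_norm ?subr_ge0 // [`|y - x|]distrC.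
by apply: lerD; apply: ler_piMl; rewrite ?normr_ge0 //; lra.
Qed.

End normed.

Lemma cvgn_summable_increments (V : completeNormedModType R) (u : V ^nat) c :
  (forall k, `|u k.+1 - u k| <= c k) -> summable c -> cvgn u.
Proof.
move=> uc sc; have c0 k : 0 <= c k := le_trans (normr_ge0 _) (uc k).
have : cvgn (series (telescope u)).
  apply: normed_cvg; apply: series_le_cvg (summable_cvg_series c0 sc) => // k.
  exact: normr_ge0.
rewrite telescopeK => cvg_shifted.
have -> : u = (fun k => u k - u 0%N + u 0%N) by apply/funext => k; rewrite subrK.
exact: is_cvgD cvg_shifted (is_cvg_cst _).
Qed.

End sequences.

Section extended_reals.
Context {R : realType}.

Lemma EFin_lt_dense (x : R) (y : \bar R) :
  (x%:E < y)%E -> exists2 a : R, x < a & (a%:E < y)%E.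
Proof.
case: y => [s||] //; rewrite ?lte_fin => xy.
  by exists ((x + s) / 2); rewrite ?lte_fin; lra.
by exists (x + 1); [lra | exact: ltry].
Qed.

Lemma EFin_le_gap (y : \bar R) (t c s : R) :
  (t%:E < y)%E -> (y + c%:E <= s%:E)%E -> t <= s - c.
Proof.
move=> ty ycs; rewrite lerBrDr -lee_fin EFinD; apply/ltW/(lt_le_trans _ ycs).
by rewrite lteD2rE.
Qed.

End extended_reals.

Section euclidean.
Context {R : realType} {n : nat}.
Implicit Types (u v : nat -> 'rV[R]_n) (a b w : 'rV[R]_n).

Lemma enorm_ge0 w : 0 <= enorm w.
Proof. exact: sqrtr_ge0. Qed.

Lemma enorm0 : enorm (0 : 'rV[R]_n) = 0.
Proof. by rewrite /enorm big1 ?sqrtr0 // => i _; rewrite mxE expr0n. Qed.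

Lemma normr_le_enorm w : `|w| <= enorm w.
Proof.
change `|w| with (mx_norm w); rewrite mx_normrE; apply/bigmax_leP; split=> [|[i j] _ /=].
  exact: enorm_ge0.
rewrite ord1 /enorm -sqrtr_sqr ler_wsqrtr // (bigD1 j) //= lerDl.
by apply: sumr_ge0 => k _; exact: sqr_ge0.
Qed.

Lemma enorm_continuous : continuous (@enorm R n).
Proof.
move=> w; apply: (@continuous_comp _ _ _ (fun w : 'rV[R]_n => \sum_(i < n) w ord0 i ^+ 2)).
  apply: continuous_big => [|i _ x]; first exact: add_continuous.
  by apply: continuousM; exact: coord_continuous.
exact: sqrt_continuous.
Qed.

Lemma cvg_enormB u v a b : u k @[k --> \oo] --> a -> v k @[k --> \oo] --> b ->
  enorm (u k - v k) @[k --> \oo] --> enorm (a - b).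
Proof. by move=> ua vb; exact: (continuous_cvg _ (@enorm_continuous (a - b)) (cvgB ua vb)). Qed.

Lemma cvg_converges_to u a : u k @[k --> \oo] --> a -> converges_to u a.
Proof.
move=> ua e e0; have [N _ uN] := (cvgrPdist_lt _ _).1 (cvg_enormB ua (cvg_cst a)) e e0.
exists N => k /uN /=.
by rewrite subrr enorm0 sub0r normrN ger0_norm ?enorm_ge0.
Qed.

Lemma prox_closed_graph (phi : 'rV[R]_n -> \bar R) (p gamma : R) u v a b :
  0 < p -> lsc phi -> (forall w, phi w != -oo%E) ->
  u k @[k --> \oo] --> a -> v k @[k --> \oo] --> b ->
  (forall k, v k \in prox phi p gamma (u k)) -> b \in prox phi p gamma a.
Proof.
move=> p0 phi_lsc phi_gtNy ua vb v_prox; apply/mem_set => z; rewrite /prox_obj.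
pose pen w w' := powR (enorm (w - w')) p / (p * gamma).
have pen_cvg v' b' : v' k @[k --> \oo] --> b' -> pen (u k) (v' k) @[k --> \oo] --> pen a b'.
  move=> vb'; apply: cvgM (cvg_cst _); apply: cvg_powR => // [k|]; first exact: enorm_ge0.
  exact: cvg_enormB.
have [->|phi_z_ny] := eqVneq (phi z) +oo%E; first by rewrite addye ?leey.
have [r phi_z] : exists r, phi z = r%:E.
  by exists (fine (phi z)); rewrite fineK // fin_numE phi_gtNy phi_z_ny.
rewrite phi_z -EFinD leNgt; apply/negP; rewrite -lteBlDr // -EFinB.
(* Between the two sides sits a real t; phi (v k) > t eventually by lower
   semicontinuity, and the prox inequality of v k survives the limit. *)
move=> /EFin_lt_dense [t tlt t_phi]; suff : t <= r + pen a z - pen a b by rewrite leNgt tlt.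
have [dl dl0 phi_gt] := phi_lsc b t t_phi.
have [N vN] := cvg_converges_to vb dl0.
have gap_cvg : r + pen (u k) z - pen (u k) (v k) @[k --> \oo] --> r + pen a z - pen a b.
  by apply: cvgB; [apply: cvgD; [exact: cvg_cst | exact: pen_cvg (cvg_cst z)] | exact: pen_cvg].
rewrite -(cvg_lim _ gap_cvg) //; apply: limr_ge; first exact: cvgP gap_cvg.
exists N => // k /vN /phi_gt t_phik; apply: EFin_le_gap t_phik _.
by have := set_mem (v_prox k) z; rewrite /prox_obj phi_z -EFinD.
Qed.

End euclidean.

Theorem theorem11 (R : realType) (n : nat)
  (phi : 'rV[R]_n -> \bar R) (p gamma sigma vartheta : R)
  (eps delta : nat -> R) (P : nat -> 'rV[R]_n -> 'rV[R]_n)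
  (x xbar ybar d : nat -> 'rV[R]_n) :
  1 < p ->
  proper_fun phi -> lsc phi -> bounded_below phi ->
  0 < gamma -> 0 < sigma -> sigma < 1 / (p * gamma) ->
  0 < vartheta -> vartheta < 1 ->
  (forall k, 0 < eps k) -> Defs.nonincreasing_seq eps -> summable eps ->
  (forall k, 0 < delta k) -> Defs.nonincreasing_seq delta -> tends_to_zero delta ->
  (* the inexact prox oracle *)
  (forall j z, (dist (P j z) (prox phi p gamma z) < (delta j)%:E)%E) ->
  (forall j z, (env_approx phi p gamma P j z < envelope phi p gamma z + (eps j)%:E)%E) ->
  (* the iterates of Boosted HiPPA *)
  (forall k, xbar k = P k (x k)) ->
  (forall k, exists m : nat,
     let trial := fun m' : nat =>
       (1 - vartheta ^+ m') *: xbar k + vartheta ^+ m' *: (x k + d k) in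
     let accept := fun z : 'rV[R]_n =>
       (env_approx phi p gamma P k.+1 z <=
          env_approx phi p gamma P k (x k)
          - (sigma * powR (enorm (resid P k (x k))) p)%:E
          + (eps k)%:E + (eps k.+1)%:E)%E in
     accept (trial m) /\ (forall m', (m' < m)%N -> ~ accept (trial m')) /\
     x k.+1 = trial m) ->
  (* the auxiliary sequence ybar *)
  (forall k, ybar k \in prox phi p gamma (x k)) ->
  (forall k, (enorm (xbar k - ybar k))%:E = dist (xbar k) (prox phi p gamma (x k))) ->
  summable (fun k => enorm (resid P k (x k))) ->
  summable (fun k => enorm (d k)) ->
  exists xhat : 'rV[R]_n,
    converges_to x xhat /\ converges_to xbar xhat /\ converges_to ybar xhat /\
    xhat \in prox phi p gamma xhat.
Proof.
move=> p1 [_ phi_gtNy] phi_lsc _ _ _ _ th0 th1 _ _ _ _ _ delta0 oracle_dist _ xbarE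
  step ybar_prox ybar_dist sum_resid sum_d.
have x_step k : `|x k.+1 - x k| <= enorm (resid P k (x k)) + enorm (d k).
  have [m [_ [_ ->]]] := step k.
  have th_m : 0 <= vartheta ^+ m <= 1 by rewrite exprn_ge0 ?exprn_ile1 // ltW.
  apply: le_trans (norm_relaxation_step_le (x k) (xbar k) (d k) th_m) _.
  by rewrite xbarE; apply: lerD; exact: normr_le_enorm.
have [xhat x_xhat] : exists xhat : 'rV[R]_n, x k @[k --> \oo] --> xhat.
  by exists (limn x); exact: cvgn_summable_increments x_step (summableD sum_resid sum_d).
have resid0 : resid P k (x k) @[k --> \oo] --> 0.
  apply: (cvg0_norm_le (fun k => normr_le_enorm _)).
  exact: summable_cvg0 (fun k => enorm_ge0 _) sum_resid.
have xbar_xhat : xbar k @[k --> \oo] --> xhat.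
  have -> : xbar = x - (fun k => resid P k (x k)).
    by apply/funext => k; rewrite /resid xbarE !fctE subKr.
  by rewrite -[xhat]subr0; exact: cvgB.
have gap0 : xbar k - ybar k @[k --> \oo] --> 0.
  apply: (cvg0_norm_le _ (tends_to_zero_cvg0 delta0)) => k.
  apply: le_trans (normr_le_enorm _) _; apply/ltW; rewrite -lte_fin ybar_dist xbarE.
  exact: oracle_dist.
have ybar_xhat : ybar k @[k --> \oo] --> xhat.
  have -> : ybar = xbar - (xbar - ybar) by rewrite opprB addrC subrK.
  by rewrite -[xhat]subr0; exact: cvgB.
exists xhat; split; [|split; [|split]]; try exact: cvg_converges_to.
exact: prox_closed_graph (lt_trans ltr01 p1) phi_lsc phi_gtNy x_xhat ybar_xhat ybar_prox.
Qed.
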